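(* Let $C$ be a right cancellative Möbius category and $R$ a commutative ring with identity. The relation on $C_1$ given by $f\le g$ iff $g=hf$ for some morphism $h$ is a partial order, and the convolution algebra $([C_1,R],\star)$ is isomorphic to the subalgebra of the incidence algebra $[\mathbb{I}_{(C_1,\le)},R]$ consisting of those $\alpha$ with $\alpha[f,gf]=\alpha[1_{tf},g]$ for all composable $f,g$, via the map sending $\beta\in[C_1,R]$ to $\widehat{\beta}$ with $\widehat{\beta}[f,hf]=\beta(h)$.
   Context: $C_1$ is the set of morphisms; $tf$ denotes the target of $f$. A category is Möbius if each morphism $f$ has finitely many proper decompositions (tuples $(f_1,\dots,f_n)$ with $f_n\cdots f_1=f$ and, for $n\ge2$, no $f_i$ an identity). $C$ is right cancellative if $gf=hf$ implies $g=h$. The convolution algebra $[C_1,R]$ has product $(\alpha\star\beta)(f)=\sum_{f_2f_1=f}\alpha(f_1)\beta(f_2)$. The incidence algebra of a locally finite poset $P$ consists of maps on intervals $[a,c]$ ($a\le c$) with $(f\star g)[a,c]=\sum_{a\le b\le c}f[a,b]g[b,c]$. *)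

From HB Require Import structures.
From mathcomp Require Import all_boot all_order all_algebra.
From Stdlib Require Import List Classical ClassicalEpsilon.
Import GRing.Theory.
Local Open Scope ring_scope.

Record Cat := MkCat {
  Ob : Type;
  Mor : Type;
  src : Mor -> Ob;
  tgt : Mor -> Ob;
  idm : Ob -> Mor;
  cmp : Mor -> Mor -> Mor;         (* cmp g f = g f, meaningful when src g = tgt f *)
  src_id : forall x, src (idm x) = x;
  tgt_id : forall x, tgt (idm x) = x;
  src_comp : forall f g, src g = tgt f -> src (cmp g f) = src f;
  tgt_comp : forall f g, src g = tgt f -> tgt (cmp g f) = tgt g;
  cmp_id_r : forall f, cmp f (idm (src f)) = f;
  comp_id_l : forall f, cmp (idm (tgt f)) f = f;
  comp_assoc : forall f g h, src g = tgt f -> src h = tgt g ->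
      cmp h (cmp g f) = cmp (cmp h g) f
}.

Arguments src {c}. Arguments tgt {c}. Arguments idm {c}. Arguments cmp {c}.

Set Implicit Arguments. Unset Strict Implicit. Unset Printing Implicit Defensive.

Section CatDefs.
Variable C : Cat.

Definition is_id (g : Mor C) : Prop := exists x, g = idm x.

Fixpoint chain (f : Mor C) (l : list (Mor C)) : Prop :=
  match l with
  | nil => True
  | g :: l' => src g = tgt f /\ chain g l'
  end.

(* (f1, ..., fn) is a proper decomposition of f: fn ... f1 = f, and
   for n >= 2 no fi is an identity *)
Definition proper_decomp (f : Mor C) (l : list (Mor C)) : Prop :=
  match l with
  | nil => False
  | f1 :: rest =>
      chain f1 rest /\
      fold_left (fun acc g => cmp g acc) rest f1 = f /\
      (rest <> nil -> forall g, In g l -> ~ is_id g)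
  end.

End CatDefs.

Definition finiteP (A : Type) (P : A -> Prop) : Prop :=
  exists l : list A, forall x, P x <-> In x l.

Definition Mobius (C : Cat) : Prop :=
  forall f : Mor C, finiteP (proper_decomp f).

Definition right_cancellative (C : Cat) : Prop :=
  forall f g h : Mor C, src g = tgt f -> src h = tgt f ->
    cmp g f = cmp h f -> g = h.

Definition mle (C : Cat) (f g : Mor C) : Prop :=
  exists h, src h = tgt f /\ cmp h f = g.

Definition partial_order (A : Type) (r : A -> A -> Prop) : Prop :=
  (forall x, r x x) /\
  (forall x y, r x y -> r y x -> x = y) /\
  (forall x y z, r x y -> r y z -> r x z).

(* ---------- finite sums over finite sets (0 if the set is infinite) ---------- *)
Definition finsum (R : comPzRingType) (A : Type) (P : A -> Prop) (F : A -> R) : R :=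
  match excluded_middle_informative
          (exists l : list A, NoDup l /\ forall x, P x <-> In x l) with
  | left H => \sum_(x <- proj1_sig (constructive_indefinite_description _ H)) F x
  | right _ => 0
  end.

Definition ifP_R (R : comPzRingType) (P : Prop) : R :=
  if excluded_middle_informative P then 1 else 0.

Section Conv.
Variables (C : Cat) (R : comPzRingType).

Definition conv (a b : Mor C -> R) : Mor C -> R := fun f =>
  finsum (fun p : Mor C * Mor C => src p.2 = tgt p.1 /\ cmp p.2 p.1 = f)
         (fun p => a p.1 * b p.2).

Definition conv_one : Mor C -> R := fun f => ifP_R R (is_id f).
Definition conv_add (a b : Mor C -> R) : Mor C -> R := fun f => a f + b f.
Definition conv_scale (r : R) (a : Mor C -> R) : Mor C -> R := fun f => r * a f.
End Conv.

Record Itvl (C : Cat) := Itv { ilo : Mor C; ihi : Mor C; ile : mle ilo ihi }.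

Definition locally_finite (C : Cat) : Prop :=
  forall x z : Mor C, finiteP (fun y => mle x y /\ mle y z).

Section Inc.
Variables (C : Cat) (R : comPzRingType).

Definition inc_mul (a b : Itvl C -> R) : Itvl C -> R := fun i =>
  finsum (fun _ : {y : Mor C | mle (ilo i) y /\ mle y (ihi i)} => True)
         (fun y => a (Itv (proj1 (proj2_sig y))) * b (Itv (proj2 (proj2_sig y)))).

Definition inc_one : Itvl C -> R := fun i => ifP_R R (ilo i = ihi i).
Definition inc_add (a b : Itvl C -> R) : Itvl C -> R := fun i => a i + b i.
Definition inc_scale (r : R) (a : Itvl C -> R) : Itvl C -> R := fun i => r * a i.

Definition inS (a : Itvl C -> R) : Prop :=
  forall (f g : Mor C) (H : src g = tgt f)
         (p : mle f (cmp g f)) (q : mle (idm (tgt f)) g),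
    a (Itv p) = a (Itv q).
End Inc.

From HB Require Import structures.
From mathcomp Require Import all_boot all_order all_algebra.
From Stdlib Require Import List Classical ClassicalEpsilon ProofIrrelevance
  FunctionalExtensionality Permutation Lia.
Import GRing.Theory.
Local Open Scope ring_scope.
Set Implicit Arguments. Unset Strict Implicit.

(* In a right cancellative category, f <= g means that
   g = h f for a morphism h which is then UNIQUE; we call it [factor].  The
   isomorphism sends beta to [hat beta], whose value on an interval [f, g]
   is beta (factor f g).
   - Reflexivity and transitivity of <= are immediate.  Antisymmetry needs
     the Möbius condition: if k h = 1 with h, k non-identities, then
     (h, k, h, k, ...) gives proper decompositions of 1 of every length.
   - Intervals are finite: every y <= z with y, z/y non-identities is the
     first entry of a proper decomposition (y, z/y) of z.
   - An incidence function alpha lies in S iff it only depends on the factor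
     of an interval, i.e. alpha = hat (h |-> alpha[1, h]); so hat is onto S.
   - [hat] is additive and maps the unit to the unit; it is multiplicative
     because y |-> (factor lo y, factor y hi) is a bijection from [lo, hi]
     onto the factorisations of factor lo hi.
   Closure of S under products and the unit then follows by transport
   through [hat]. *)

Section FiniteSums.
Variable R : comPzRingType.

Lemma enum_of_cover (A : Type) (P : A -> Prop) (l : list A) :
  (forall x, P x -> In x l) -> exists e, NoDup e /\ forall x, P x <-> In x e.
Proof.
elim: l P => [|a l IH] P HP.
  by exists nil; split; [constructor | move=> x; split; [apply: HP | case]].
have [e [He HPe]] : exists e, NoDup e /\ forall x, P x /\ x <> a <-> In x e.
  apply: IH => x [Px Hxa]; by case: (HP x Px) => // E; case: Hxa.
case: (classic (P a)) => [Pa | nPa].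
- exists (a :: e); split.
    by constructor => // /HPe [_]; apply.
  move=> x; split=> [Px | [<- // | /HPe []//]].
  by case: (classic (x = a)) => [-> | Hxa]; [left | right; apply/HPe].
- exists e; split=> // x; split=> [Px | /HPe []//].
  by apply/HPe; split=> // Exa; apply: nPa; rewrite -Exa.
Qed.

Lemma sig_cover (A : Type) (Q : A -> Prop) (l : list A) :
  (forall x, Q x -> In x l) -> exists e : list {x | Q x}, forall y, In y e.
Proof.
move=> HQ.
suff [e He] : exists e : list {x | Q x}, forall y, In (proj1_sig y) l -> In y e.
  by exists e => y; apply/He/HQ/(proj2_sig y).
elim: l {HQ} => [|a l [e He]]; first by exists nil => y [].
case: (classic (Q a)) => [Qa | nQa].
- exists (exist _ a Qa :: e) => -[y Hy] [/= Eay | Hin]; last by right; apply: He.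
  by left; subst y; congr exist; apply: proof_irrelevance.
- exists e => -[y Hy] [/= Eay | Hin]; last exact: He.
  by subst y.
Qed.

Lemma sum_perm (A : Type) (F : A -> R) (l1 l2 : list A) :
  Permutation l1 l2 -> \sum_(x <- l1) F x = \sum_(x <- l2) F x.
Proof.
elim=> [| x l l' _ IH | x y l | l l' l'' _ IH1 _ IH2].
- by [].
- by rewrite !big_cons IH.
- by rewrite !big_cons addrCA.
- by rewrite IH1 IH2.
Qed.

Lemma sum_map (A B : Type) (g : A -> B) (F : B -> R) (l : list A) :
  \sum_(x <- List.map g l) F x = \sum_(x <- l) F (g x).
Proof. by elim: l => [|a l IH]; rewrite ?big_nil //= !big_cons IH. Qed.

Lemma sum_ext_in (A : Type) (F G : A -> R) (l : list A) :
  (forall x, In x l -> F x = G x) -> \sum_(x <- l) F x = \sum_(x <- l) G x.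
Proof.
elim: l => [|a l IH] EFG; first by rewrite !big_nil.
by rewrite !big_cons (EFG a (or_introl erefl)) IH // => x Hx; apply: EFG; right.
Qed.

Lemma finsum_eq (A : Type) (P : A -> Prop) (F : A -> R) (e : list A) :
  NoDup e -> (forall x, P x <-> In x e) -> finsum P F = \sum_(x <- e) F x.
Proof.
move=> He HPe; rewrite /finsum.
case: excluded_middle_informative => [H | []]; last by exists e.
case: (constructive_indefinite_description _ H) => e0 [He0 HPe0] /=.
apply/sum_perm/NoDup_Permutation => // x.
by rewrite -HPe HPe0.
Qed.

Lemma NoDup_map_inj (A B : Type) (P : A -> Prop) (g : A -> B) (l : list A) :
  (forall x y, P x -> P y -> g x = g y -> x = y) -> (forall x, In x l -> P x) ->
  NoDup l -> NoDup (List.map g l).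
Proof.
move=> ginj; elim: l => [|a l IH] HP; first by constructor.
move/NoDup_cons_iff=> [Ha Hl] /=; constructor; last by apply: IH => // x Hx; apply: HP; right.
move/in_map_iff=> [y [Eya Hy]].
have Eya' : y = a by apply: ginj => //; apply: HP; [right | left].
by rewrite Eya' in Hy.
Qed.

Lemma finsum_reindex (A B : Type) (P : A -> Prop) (Q : B -> Prop)
    (F : B -> R) (G : A -> R) (g : A -> B) :
  (exists l, forall x, P x -> In x l) ->
  (forall x, P x -> Q (g x)) ->
  (forall x y, P x -> P y -> g x = g y -> x = y) ->
  (forall b, Q b -> exists a, P a /\ g a = b) ->
  (forall x, P x -> F (g x) = G x) ->
  finsum Q F = finsum P G.
Proof.
move=> [l Hl] PQ ginj gsurj EFG.
have [e [He HPe]] := enum_of_cover Hl.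
rewrite (finsum_eq G He HPe) (finsum_eq (e := List.map g e) F).
- by rewrite sum_map; apply: sum_ext_in => x /HPe; apply: EFG.
- by apply: (NoDup_map_inj ginj) => // x /HPe.
- move=> b; split=> [/gsurj [a [Pa <-]] | /in_map_iff [a [<- /HPe]]].
    by apply/in_map/HPe.
  exact: PQ.
Qed.

Lemma ifP_R_iff (P Q : Prop) : (P <-> Q) -> ifP_R R P = ifP_R R Q.
Proof.
move=> PQ; rewrite /ifP_R.
by do 2 case: excluded_middle_informative => ? //; exfalso; tauto.
Qed.

End FiniteSums.

Lemma finite_lengths_bounded (A : Type) (P : list A -> Prop) :
  finiteP P -> exists N, forall l, P l -> (length l <= N)%coq_nat.
Proof.
move=> [L HL]; exists (list_sum (List.map (@length A) L)) => l /HL.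
elim: L {HL} => [|a L IH] //= [-> | /IH]; lia.
Qed.

Arguments src_comp {c f g}.
Arguments tgt_comp {c f g}.
Arguments comp_assoc {c f g h}.

Section Category.
Variable C : Cat.
Implicit Types f g h k y lo hi : Mor C.

Lemma idm_le h : mle (idm (src h)) h.
Proof. by exists h; rewrite tgt_id cmp_id_r. Qed.

Lemma mle_trans f g h : mle f g -> mle g h -> mle f h.
Proof.
move=> [a [Ha Ea]] [b [Hb Eb]].
have Hba : src b = tgt a by rewrite Hb -Ea tgt_comp.
by exists (cmp b a); rewrite src_comp // -comp_assoc // Ea.
Qed.

Fixpoint alternate h k (n : nat) : list (Mor C) :=
  if n is n'.+1 then h :: k :: alternate h k n' else nil.

Lemma length_alternate h k n : length (alternate h k n) = (2 * n)%coq_nat.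
Proof. by elim: n => //= n ->; lia. Qed.

Lemma In_alternate h k n g : In g (alternate h k n) -> g = h \/ g = k.
Proof. by elim: n => [|n IH] //= [<- | [<- | /IH]]; auto. Qed.

Section Retraction.
Variables h k : Mor C.
Hypotheses (Hkh : src k = tgt h) (Ekh : cmp k h = idm (src h)).

(* k h = 1 makes (h, k, h, k, ...) a composable chain. *)
Lemma tgt_retraction : tgt k = src h.
Proof. by rewrite -(tgt_comp Hkh) Ekh tgt_id. Qed.

Lemma fold_alternate n acc :
  tgt acc = src h -> fold_left (fun acc g => cmp g acc) (alternate h k n) acc = acc.
Proof.
elim: n acc => [|n IH] acc Hacc //=.
rewrite comp_assoc ?Hacc // Ekh -Hacc comp_id_l.
exact: IH.
Qed.

Lemma chain_alternate n : chain k (alternate h k n).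
Proof. by elim: n => //= n IH; rewrite tgt_retraction. Qed.

Lemma proper_decomp_alternate n :
  ~ is_id h -> ~ is_id k -> proper_decomp (idm (src h)) (alternate h k n.+1).
Proof.
move=> nh nk /=; split; first by split; [| apply: chain_alternate].
split; first by rewrite Ekh fold_alternate // tgt_id.
by move=> _ g [<- | [<- | /In_alternate [->|->]]].
Qed.

Lemma retraction_is_id : Mobius C -> is_id h.
Proof.
move=> HM; apply: NNPP => nh.
have nk : ~ is_id k.
  move=> [o Ek]; apply: nh; exists (src h).
  have Eo : o = tgt h by rewrite -Hkh Ek src_id.
  by rewrite -Ekh Ek Eo comp_id_l.
have [N HN] := finite_lengths_bounded (HM (idm (src h))).
have := HN _ (proper_decomp_alternate N nh nk).
rewrite length_alternate; lia.
Qed.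

End Retraction.

Lemma is_id_src g : is_id g -> g = idm (src g).
Proof. by move=> [o ->]; rewrite src_id. Qed.

Section Mobius.
Hypothesis HM : Mobius C.

(* Intervals of (C_1, <=) are finite: the interior points y of [x, z] are
   first entries of proper decompositions (y, z/y) of z. *)
Lemma mle_locally_finite : locally_finite C.
Proof.
move=> x z; have [L HL] := HM z.
pose heads := List.map (fun l => if l is a :: _ then a else z) L.
suff cover : forall y, mle x y /\ mle y z -> In y (z :: idm (src z) :: heads).
  by have [e [_ He]] := enum_of_cover cover; exists e.
move=> y [_ [b [Hb Eb]]].
case: (classic (is_id b)) => [/is_id_src Ib | nb].
  by left; rewrite -Eb Ib Hb comp_id_l.
case: (classic (is_id y)) => [/is_id_src Iy | ny].
  by right; left; rewrite -Eb src_comp // -Iy.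
right; right; apply/in_map_iff; exists (y :: b :: nil); split=> //.
by apply/HL; split=> //; split=> // _ g [<- | [<- | []]].
Qed.

Hypothesis HRC : right_cancellative C.

(* If f <= g <= f, then g = h f, f = k g, so k h = 1 by right cancellation,
   and h is an identity by [retraction_is_id]. *)
Lemma mle_antisym f g : mle f g -> mle g f -> f = g.
Proof.
move=> [h [Hh Eh]] [k [Hk Ek]].
have Hkh : src k = tgt h by rewrite Hk -Eh tgt_comp.
have Ekh : cmp k h = idm (src h).
  by apply: (HRC (f := f)); rewrite ?src_comp ?src_id // -comp_assoc // Eh Ek Hh comp_id_l.
have Eid : h = idm (tgt f).
  by rewrite -Hh; apply/is_id_src/(retraction_is_id Hkh Ekh).
by rewrite -Eh Eid comp_id_l.
Qed.

Lemma mle_partial_order : partial_order (@mle C).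
Proof.
split; last split.
- by move=> f; exists (idm (tgt f)); rewrite src_id comp_id_l.
- exact: mle_antisym.
- exact: mle_trans.
Qed.

End Mobius.

Definition factor f g (p : mle f g) : Mor C :=
  proj1_sig (constructive_indefinite_description _ p).

Lemma factor_spec f g (p : mle f g) : src (factor p) = tgt f /\ cmp (factor p) f = g.
Proof. by rewrite /factor; case: constructive_indefinite_description. Qed.

Section Factor.
Hypothesis HRC : right_cancellative C.

Lemma factor_unique f g (p : mle f g) h : src h = tgt f -> cmp h f = g -> factor p = h.
Proof.
move=> Hh Eh; have [Hp Ep] := factor_spec p.
by apply: (HRC (f := f)); rewrite ?Ep.
Qed.

Lemma factor_comp lo y hi (p : mle lo y) (q : mle y hi) (r : mle lo hi) :
  src (factor q) = tgt (factor p) /\ cmp (factor q) (factor p) = factor r.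
Proof.
have [Hp Ep] := factor_spec p; have [Hq Eq] := factor_spec q.
have Hqp : src (factor q) = tgt (factor p) by rewrite Hq -(tgt_comp Hp) Ep.
split=> //; symmetry; apply: factor_unique; first by rewrite src_comp.
by rewrite -comp_assoc // Ep.
Qed.

Lemma factor_is_id f g (p : mle f g) : is_id (factor p) <-> f = g.
Proof.
have [Hp Ep] := factor_spec p; split.
- by move/is_id_src; rewrite Hp => Ef; rewrite -Ep Ef comp_id_l.
- by move=> Efg; exists (tgt f); apply: factor_unique; rewrite ?src_id ?comp_id_l.
Qed.

End Factor.

Section Incidence.
Variable R : comPzRingType.
Implicit Types (a : Itvl C -> R) (beta : Mor C -> R).

Lemma Itv_congr a lo hi lo' hi' (p : mle lo hi) (p' : mle lo' hi') :
  lo = lo' -> hi = hi' -> a (Itv p) = a (Itv p').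
Proof. by move=> El Eh; subst; congr (a (Itv _)); apply: proof_irrelevance. Qed.

Lemma inS_factor a : inS a -> forall f g (p : mle f g),
  a (Itv p) = a (Itv (idm_le (factor p))).
Proof.
move=> Ha f g p; have [Hp Ep] := factor_spec p.
have p' : mle f (cmp (factor p) f) by exists (factor p).
have q : mle (idm (tgt f)) (factor p) by rewrite -Hp; apply: idm_le.
transitivity (a (Itv p')); first exact: Itv_congr.
by rewrite (Ha _ _ Hp p' q); apply: Itv_congr; rewrite ?Hp.
Qed.

Definition hat beta : Itvl C -> R := fun i => beta (factor (ile i)).

Lemma hat_surj a : inS a -> hat (fun h => a (Itv (idm_le h))) = a.
Proof.
move=> Ha; apply: functional_extensionality => -[lo hi p].
by rewrite /hat /= -inS_factor.
Qed.

(* beta is recovered from hat beta on the intervals [1, h]. *)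
Lemma hat_inj beta1 beta2 : hat beta1 = hat beta2 -> beta1 = beta2.
Proof.
move=> E; apply: functional_extensionality => h.
have [Hh Eh] := factor_spec (idm_le h).
move: (f_equal (fun a => a (Itv (idm_le h))) E); rewrite /hat /=.
suff -> : factor (idm_le h) = h by [].
have Hh' : src (factor (idm_le h)) = src h by rewrite Hh tgt_id.
by have := @cmp_id_r C (factor (idm_le h)); rewrite Hh' Eh => /esym.
Qed.

Hypothesis HRC : right_cancellative C.

Lemma hat_factor beta f h (H : src h = tgt f) (p : mle f (cmp h f)) :
  hat beta (Itv p) = beta h.
Proof. by rewrite /hat /= (factor_unique HRC p H). Qed.

Lemma hat_inS beta : inS (hat beta).
Proof.
move=> f g H p q; rewrite hat_factor // /hat /=.
by rewrite (factor_unique HRC q (h := g)) ?tgt_id // -H cmp_id_r.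
Qed.

Lemma hat_one : hat (@conv_one C R) = @inc_one C R.
Proof.
apply: functional_extensionality => -[lo hi p].
exact/ifP_R_iff/(factor_is_id HRC).
Qed.

Hypothesis HM : Mobius C.

(* hat is multiplicative: y |-> (factor lo y, factor y hi) is a bijection
   from the interval [lo, hi] onto the factorisations of factor lo hi. *)
Lemma hat_mul beta1 beta2 : hat (conv beta1 beta2) = inc_mul (hat beta1) (hat beta2).
Proof.
apply: functional_extensionality => -[lo hi r].
rewrite /hat /conv /inc_mul /=.
apply: (finsum_reindex
  (g := fun y : {y | mle lo y /\ mle y hi} =>
          (factor (proj1 (proj2_sig y)), factor (proj2 (proj2_sig y))))).
- have [l Hl] := mle_locally_finite HM lo hi.
  have [e He] := sig_cover (Q := fun y => mle lo y /\ mle y hi) (l := l) (fun y => proj1 (Hl y)).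
  by exists e.
- by move=> [y [p q]] _ /=; apply: factor_comp.
- move=> [x Px] [y Py] _ _ /= [Ex _].
  apply: eq_sig_hprop => [z pz qz | /=]; first exact: proof_irrelevance.
  by rewrite -(proj2 (factor_spec (proj1 Px))) -(proj2 (factor_spec (proj1 Py))) Ex.
- move=> [p1 p2] /= [H21 E21]; have [Hr Er] := factor_spec r.
  have Hp1 : src p1 = tgt lo by rewrite -(src_comp H21) E21.
  have q1 : mle lo (cmp p1 lo) by exists p1.
  have E2 : cmp p2 (cmp p1 lo) = hi by rewrite comp_assoc // E21.
  have q2 : mle (cmp p1 lo) hi by exists p2; rewrite tgt_comp.
  exists (exist _ (cmp p1 lo) (conj q1 q2)); split=> //=.
  by congr pair; apply: (factor_unique HRC); rewrite ?tgt_comp.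
- by [].
Qed.

End Incidence.
End Category.

Theorem theorem7p4 (C : Cat) (R : comPzRingType)
  (HM : Mobius C) (HRC : right_cancellative C) :
  partial_order (@mle C) /\ locally_finite C /\
  (* the set S is a subalgebra of the incidence algebra *)
  ((forall a b : Itvl C -> R, inS a -> inS b -> inS (inc_add a b)) /\
   (forall (r : R) (a : Itvl C -> R), inS a -> inS (inc_scale r a)) /\
   (forall a b : Itvl C -> R, inS a -> inS b -> inS (inc_mul a b)) /\
   inS (@inc_one C R)) /\
  (* beta |-> beta^ is an algebra isomorphism from [C_1,R] onto S *)
  exists Phi : (Mor C -> R) -> (Itvl C -> R),
    (forall (beta : Mor C -> R) (f h : Mor C) (H : src h = tgt f)
            (p : mle f (cmp h f)), Phi beta (Itv p) = beta h) /\
    (forall b1 b2, Phi b1 = Phi b2 -> b1 = b2) /\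
    (forall beta, inS (Phi beta)) /\
    (forall alpha, inS alpha -> exists beta, Phi beta = alpha) /\
    (forall b1 b2, Phi (conv_add b1 b2) = inc_add (Phi b1) (Phi b2)) /\
    (forall (r : R) b, Phi (conv_scale r b) = inc_scale r (Phi b)) /\
    (forall b1 b2, Phi (conv b1 b2) = inc_mul (Phi b1) (Phi b2)) /\
    Phi (@conv_one C R) = @inc_one C R.
Proof.
split; first exact: mle_partial_order.
split; first exact: mle_locally_finite.
split.
  split; last split; last split.
  - by move=> a b Ha Hb f g H p q; rewrite /inc_add (Ha f g H p q) (Hb f g H p q).
  - by move=> r a Ha f g H p q; rewrite /inc_scale (Ha f g H p q).
  (* products and the unit of S are transported from [C_1, R] by hat *)
  - move=> a b /hat_surj <- /hat_surj <-.
    by rewrite -hat_mul //; apply: hat_inS.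
  - by rewrite -hat_one //; apply: hat_inS.
exists (@hat C R).
split; first exact: hat_factor.
split; first exact: hat_inj.
split; first exact: hat_inS.
split; first by move=> alpha /hat_surj; exists (fun h => alpha (Itv (idm_le h))).
split; first by [].
split; first by [].
split; first exact: hat_mul.
exact: hat_one.
Qed.
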